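(* Let $R$ be a domain and let $G$ be a finite undirected graph without loops with vertex set $A=\{a_1,a_2,\dots,a_n\}$, where $n\geqslant 2$. Let $L(A;G)$ be one of the following Lie $R$-algebras: the partially commutative Lie algebra $\mathcal{L}(A;G)$, the partially commutative metabelian Lie algebra $\mathcal{M}(A;G)$, or the partially commutative nilpotent Lie algebra $\mathcal{N}_m(A;G)$ of degree $m\geqslant 2$. Then $L(A;G)$ splits into a direct sum $L(A;G)=L_1\oplus L_2$ of two non-zero subalgebras $L_1,L_2$ if and only if the complement graph $\overline{G}$ is not connected.
   Context: All Lie algebras are Lie algebras over the domain $R$. For vertices $a,b$ of $G$ write $a\leftrightarrow b$ if $\{a,b\}$ is an edge of $G$. The complement graph $\overline{G}$ has vertex set $A$, and distinct $a,b$ are adjacent in $\overline{G}$ iff they are not adjacent in $G$. For a variety $\mathfrak{M}$ of Lie $R$-algebras, the partially commutative Lie algebra in $\mathfrak{M}$ with defining graph $G$ is the Lie algebra presented in $\mathfrak{M}$ by generators $A$ and defining relations $[a_i,a_j]=0$ for all edges $\{a_i,a_j\}$ of $G$ (no other relations besides the identities of $\mathfrak{M}$). $\mathcal{L}(A;G)$ is obtained for $\mathfrak{M}$ the variety of all Lie algebras, $\mathcal{M}(A;G)$ for the variety of metabelian Lie algebras (identity $[[x,y],[z,t]]=0$), and $\mathcal{N}_m(A;G)$ for the variety of nilpotent Lie algebras of degree $m$ (all Lie products of $m+1$ elements vanish). A decomposition $L=L_1\oplus L_2$ into a direct sum of subalgebras means $L_1,L_2$ are subalgebras, $L$ is the direct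 sum of $L_1$ and $L_2$ as $R$-modules, and $[L_1,L_2]=0$. *)

From HB Require Import structures.
From mathcomp Require Import all_boot all_order all_algebra.
Set Implicit Arguments. Unset Strict Implicit. Unset Printing Implicit Defensive.
Import GRing.Theory.
Local Open Scope ring_scope.

Structure lieAlgType (R : pzRingType) := LieAlg {
  lie_sort :> lmodType R;
  lie_br : lie_sort -> lie_sort -> lie_sort;
  lie_linl : forall (a : R) (x y z : lie_sort),
      lie_br (a *: x + y) z = a *: lie_br x z + lie_br y z;
  lie_linr : forall (a : R) (x y z : lie_sort),
      lie_br z (a *: x + y) = a *: lie_br z x + lie_br z y;
  lie_alt : forall x : lie_sort, lie_br x x = 0;
  lie_jacobi : forall x y z : lie_sort,
      lie_br x (lie_br y z) + lie_br y (lie_br z x) + lie_br z (lie_br x y) = 0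
}.

Arguments lie_br {R L} : rename.

Definition lie_hom (R : pzRingType) (L L' : lieAlgType R) (f : L -> L') : Prop :=
  (forall (a : R) (x y : L), f (a *: x + y) = a *: f x + f y) /\
  (forall x y : L, f (lie_br x y) = lie_br (f x) (f y)).

Definition lnorm (R : pzRingType) (L : lieAlgType R) (x : L) (s : seq L) : L :=
  foldl (fun u v => lie_br u v) x s.

Inductive pc_kind := PC_all | PC_metabelian | PC_nilpotent of nat.

Definition in_variety (R : pzRingType) (k : pc_kind) (L : lieAlgType R) : Prop :=
  match k with
  | PC_all => True
  | PC_metabelian =>
      forall x y z t : L, lie_br (lie_br x y) (lie_br z t) = 0
  | PC_nilpotent m =>
      forall (x : L) (s : seq L), size s = m -> lnorm x s = 0
  end.

(* L with generators gen : 'I_n -> L is the partially commutative Lie algebra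
   in the variety k with defining graph G: presented in the variety by the
   generators and the relations [a_i,a_j] = 0 for edges {a_i,a_j},
   expressed by the universal property of the presentation. *)
Definition pc_presentation (R : pzRingType) (k : pc_kind) (n : nat)
    (G : rel 'I_n) (L : lieAlgType R) (gen : 'I_n -> L) : Prop :=
  in_variety k L /\
  (forall i j, G i j -> lie_br (gen i) (gen j) = 0) /\
  (forall (L' : lieAlgType R) (g' : 'I_n -> L'),
      in_variety k L' ->
      (forall i j, G i j -> lie_br (g' i) (g' j) = 0) ->
      exists f : L -> L',
        [/\ lie_hom f, (forall i, f (gen i) = g' i) &
            forall f' : L -> L', lie_hom f' -> (forall i, f' (gen i) = g' i) ->
              forall x, f' x = f x]).

Definition lie_subalg (R : pzRingType) (L : lieAlgType R) (S : L -> Prop) : Prop :=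
  [/\ S 0, (forall (a : R) x y, S x -> S y -> S (a *: x + y)) &
      (forall x y, S x -> S y -> S (lie_br x y))].

Definition lie_direct_sum (R : pzRingType) (L : lieAlgType R) (L1 L2 : L -> Prop) : Prop :=
  [/\ lie_subalg L1, lie_subalg L2,
      (forall x : L, exists y z, [/\ L1 y, L2 z & x = y + z]),
      (forall x : L, L1 x -> L2 x -> x = 0) &
      (forall x y : L, L1 x -> L2 y -> lie_br x y = 0)].

Definition compl_graph (n : nat) (G : rel 'I_n) : rel 'I_n :=
  fun i j => (i != j) && ~~ G i j.

Definition graph_connected (n : nat) (E : rel 'I_n) : Prop :=
  forall i j : 'I_n, connect E i j.

From HB Require Import structures.
From mathcomp Require Import all_boot all_order all_algebra.
From mathcomp Require Import boolp ring zify.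
Set Implicit Arguments. Unset Strict Implicit. Unset Printing Implicit Defensive.
Import GRing.Theory.
Local Open Scope ring_scope.

(* If the complement graph is disconnected, a connected component A of it is
   joined in G to every vertex outside A.  Sending the generators outside A,
   resp. inside A, to 0 then defines two commuting complementary projections,
   and their images split L.

   Conversely, map L onto the two-step nilpotent model [quadLie], which records
   the linear part u in R^n of an element together with the 2x2 minors
   u_p v_q - u_q v_p along the edges of the complement graph.  Elements of L1
   and L2 commute, so these minors vanish between linear parts of L1 and of L2.
   Splitting every generator as y_i + z_i and propagating along the connected
   complement graph (R is a domain), one of the summands, say L2, has no linear
   parts at all.  Then L2 lies in [L2, L2], and such a perfect subset is 0: in
   the metabelian and nilpotent cases by iterating the inclusion, and for
   partially commutative Lie algebras by the degree filtration, realised by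
   homomorphisms into the truncated current algebras [truncLie L M]. *)

Section LieCalculus.
Variables (R : pzRingType) (L : lieAlgType R).
Implicit Types x y z : L.

Lemma lie_br0l z : lie_br 0 z = 0 :> L.
Proof. by have := lie_linl (-1) z z z; rewrite !scaleN1r !addNr. Qed.

Lemma lie_br0r z : lie_br z 0 = 0 :> L.
Proof. by have := lie_linr (-1) z z z; rewrite !scaleN1r !addNr. Qed.

Lemma lie_brDl x y z : lie_br (x + y) z = lie_br x z + lie_br y z.
Proof. by have := lie_linl 1 x y z; rewrite !scale1r. Qed.

Lemma lie_brDr x y z : lie_br z (x + y) = lie_br z x + lie_br z y.
Proof. by have := lie_linr 1 x y z; rewrite !scale1r. Qed.

Lemma lie_brZl a x z : lie_br (a *: x) z = a *: lie_br x z.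
Proof. by have := lie_linl a x 0 z; rewrite !addr0 lie_br0l addr0. Qed.

Lemma lie_br_anti x y : lie_br x y = - lie_br y x.
Proof.
have := lie_alt (x + y); rewrite lie_brDl !lie_brDr !lie_alt add0r addr0 => /eqP.
by rewrite addr_eq0 => /eqP.
Qed.

Lemma lie_br_suml I (r : seq I) (P : pred I) (F : I -> L) y :
  lie_br (\sum_(i <- r | P i) F i) y = \sum_(i <- r | P i) lie_br (F i) y.
Proof. by apply: (big_morph (lie_br^~ y)) => [u v|]; rewrite ?lie_brDl ?lie_br0l. Qed.

Lemma lie_br_sumr I (r : seq I) (P : pred I) (F : I -> L) y :
  lie_br y (\sum_(i <- r | P i) F i) = \sum_(i <- r | P i) lie_br y (F i).
Proof. by apply: (big_morph (lie_br y)) => [u v|]; rewrite ?lie_brDr ?lie_br0r. Qed.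

Lemma lie_br_centralizes c x y :
  lie_br c x = 0 -> lie_br c y = 0 -> lie_br c (lie_br x y) = 0.
Proof.
move=> cx cy; have := lie_jacobi c x y.
by rewrite (lie_br_anti y c) cx cy oppr0 !lie_br0r !addr0.
Qed.

End LieCalculus.

Section LieHom.
Variables (R : pzRingType) (L L' : lieAlgType R) (f : L -> L').
Hypothesis hf : lie_hom f.

Lemma lie_hom0 : f 0 = 0.
Proof. by have := hf.1 (-1) 0 0; rewrite !scaleN1r oppr0 addr0 addNr. Qed.

Lemma lie_homD x y : f (x + y) = f x + f y.
Proof. by have := hf.1 1 x y; rewrite !scale1r. Qed.

Lemma lie_homZ a x : f (a *: x) = a *: f x.
Proof. by have := hf.1 a x 0; rewrite !addr0 lie_hom0 addr0. Qed.

Lemma lie_hom_br x y : f (lie_br x y) = lie_br (f x) (f y).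
Proof. exact: hf.2. Qed.

Lemma lie_hom_sum I (r : seq I) (P : pred I) (F : I -> L) :
  f (\sum_(i <- r | P i) F i) = \sum_(i <- r | P i) f (F i).
Proof. by apply: (big_morph f) => [u v|]; rewrite ?lie_homD ?lie_hom0. Qed.

End LieHom.

Lemma lie_hom_id (R : pzRingType) (L : lieAlgType R) : lie_hom (@id L).
Proof. by []. Qed.

Lemma lie_hom_comp (R : pzRingType) (L1 L2 L3 : lieAlgType R)
    (f : L1 -> L2) (g : L2 -> L3) :
  lie_hom f -> lie_hom g -> lie_hom (g \o f).
Proof. by move=> hf hg; split=> [a x y|x y] /=; rewrite ?hf.1 ?hg.1 ?hf.2 ?hg.2. Qed.

Lemma lie_hom_zero (R : pzRingType) (L L' : lieAlgType R) :
  lie_hom (fun _ : L => 0 : L').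
Proof. by split=> [a x y|x y]; rewrite ?scaler0 ?addr0 ?lie_br0l. Qed.

Inductive lie_generated (R : pzRingType) (L : lieAlgType R) (n : nat)
    (gen : 'I_n -> L) : L -> Prop :=
  | lie_generated_gen i : lie_generated gen (gen i)
  | lie_generated0 : lie_generated gen 0
  | lie_generatedZD a x y :
      lie_generated gen x -> lie_generated gen y -> lie_generated gen (a *: x + y)
  | lie_generated_br x y :
      lie_generated gen x -> lie_generated gen y -> lie_generated gen (lie_br x y).

Section GeneratedSubalgebra.
Variables (R : pzRingType) (L : lieAlgType R) (n : nat) (gen : 'I_n -> L).

Definition generatedb : pred L := fun x => `[< lie_generated gen x >].

Lemma generatedb_submod_closed : subsemimod_closed generatedb.
Proof.
split; first split.
- exact/asboolP/lie_generated0.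
- move=> x y /asboolP gx /asboolP gy; apply/asboolP.
  by rewrite -[x]scale1r; apply: lie_generatedZD.
- move=> a x /asboolP gx; apply/asboolP.
  by rewrite -[_ *: _]addr0; apply: lie_generatedZD => //; apply: lie_generated0.
Qed.

Record generated := Generated { gval : L; gvalP : generatedb gval }.
HB.instance Definition _ := [isSub for gval].
HB.instance Definition _ := [Choice of generated by <:].
HB.instance Definition _ := GRing.SubChoice_isSubLmodule.Build R L generatedb
  generated generatedb_submod_closed.

Definition generated_br (x y : generated) : generated :=
  Generated (asboolT (lie_generated_br (asboolW (gvalP x)) (asboolW (gvalP y)))).

Definition generatedLie : lieAlgType R.
refine (@LieAlg R generated generated_br _ _ _ _).
- by move=> a x y z; apply: val_inj; rewrite /= lie_linl.
- by move=> a x y z; apply: val_inj; rewrite /= lie_linr.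
- by move=> x; apply: val_inj; rewrite /= lie_alt.
- by move=> x y z; apply: val_inj; rewrite /= lie_jacobi.
Defined.

Lemma gval_lnorm (x : generatedLie) s : gval (lnorm x s) = lnorm (gval x) (map gval s).
Proof. by elim: s x => [|a s IH] x //=; rewrite IH. Qed.

Lemma generatedLie_variety k : in_variety k L -> in_variety k generatedLie.
Proof.
case: k => //= [hv x y z t|m hv x s hs]; apply: (val_inj : injective gval).
  by rewrite /= hv.
by rewrite gval_lnorm hv // size_map.
Qed.

End GeneratedSubalgebra.

Arguments gval {R L n gen}.

Section Presented.
Variables (R : pzRingType) (k : pc_kind) (n : nat) (G : rel 'I_n)
  (L : lieAlgType R) (gen : 'I_n -> L).
Hypothesis hp : pc_presentation k G gen.

Lemma pc_hom_exists (L' : lieAlgType R) (g' : 'I_n -> L') :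
  in_variety k L' -> (forall i j, G i j -> lie_br (g' i) (g' j) = 0) ->
  exists f : L -> L', lie_hom f /\ forall i, f (gen i) = g' i.
Proof. by move=> hv hrel; have [f [hf hfg _]] := hp.2.2 L' g' hv hrel; exists f. Qed.

(* The universal map into the subalgebra generated by [gen], followed by the
   inclusion, is the identity by uniqueness. *)
Lemma pc_generated x : lie_generated gen x.
Proof.
have [hv [hrel huniv]] := hp.
pose g' i : generatedLie gen := Generated (asboolT (lie_generated_gen gen i)).
have [|f [hf hfg]] := @pc_hom_exists _ g' (generatedLie_variety gen hv).
  by move=> i j hij; apply: val_inj; rewrite /= hrel.
have [f0 [_ _ uniq_f0]] := huniv L gen hv hrel.
have hvf : lie_hom (gval \o f).
  by split=> [a y z|y z] /=; rewrite ?hf.1 ?hf.2.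
rewrite (uniq_f0 id (lie_hom_id L) (fun i => erefl) x).
rewrite -(uniq_f0 _ hvf (fun i => congr1 gval (hfg i)) x).
exact: asboolW (gvalP (f x)).
Qed.

End Presented.

Definition brsum (R : pzRingType) (L : lieAlgType R) (s : seq (L * L)) : L :=
  \sum_(p <- s) lie_br p.1 p.2.

Definition lie_perfect (R : pzRingType) (L : lieAlgType R) (S : L -> Prop) :=
  forall z, S z -> exists s : seq (L * L),
    (forall p, p \in s -> S p.1 /\ S p.2) /\ z = brsum s.

Section Generated.
Variables (R : pzRingType) (L : lieAlgType R) (n : nat) (gen : 'I_n -> L).
Hypothesis hgen : forall x, lie_generated gen x.

Lemma lie_hom_ext (L' : lieAlgType R) (f1 f2 : L -> L') :
  lie_hom f1 -> lie_hom f2 -> (forall i, f1 (gen i) = f2 (gen i)) -> f1 =1 f2.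
Proof.
move=> h1 h2 e x; elim: (hgen x) => [i||a y z _ ey _ ez|y z _ ey _ ez].
- exact: e.
- by rewrite !lie_hom0.
- by rewrite h1.1 h2.1 ey ez.
- by rewrite h1.2 h2.2 ey ez.
Qed.

Lemma lie_hom_centralizes (L' : lieAlgType R) (f : L -> L') (c : L') :
  lie_hom f -> (forall i, lie_br c (f (gen i)) = 0) -> forall y, lie_br c (f y) = 0.
Proof.
move=> hf hc y; elim: (hgen y) => [i||a y1 y2 _ e1 _ e2|y1 y2 _ e1 _ e2].
- exact: hc.
- by rewrite lie_hom0 // lie_br0r.
- by rewrite hf.1 lie_linr e1 e2 scaler0 addr0.
- by rewrite hf.2; apply: lie_br_centralizes.
Qed.

Lemma generated_decomp x :
  exists (c : 'I_n -> R) (s : seq (L * L)), x = \sum_i c i *: gen i + brsum s.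
Proof.
elim: (hgen x) => [i||a y z _ [c1 [s1 ->]] _ [c2 [s2 ->]]|y z _ _ _ _].
- exists (fun j => (j == i)%:R), [::].
  rewrite /brsum big_nil addr0 (bigD1 i) //= eqxx scale1r big1 ?addr0 // => j.
  by move=> /negPf->; rewrite scale0r.
- by exists (fun _ => 0), [::]; rewrite /brsum big_nil addr0 big1 // => i _; rewrite scale0r.
- exists (fun j => a * c1 j + c2 j), (map (fun p => (a *: p.1, p.2)) s1 ++ s2).
  rewrite /brsum big_cat big_map /=.
  have -> : \sum_(p <- s1) lie_br (a *: p.1) p.2 = a *: brsum s1.
    by rewrite scaler_sumr; apply: eq_bigr => p _; rewrite lie_brZl.
  have -> : \sum_i (a * c1 i + c2 i) *: gen i =
      a *: \sum_i c1 i *: gen i + \sum_i c2 i *: gen i.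
    by rewrite scaler_sumr -big_split; apply: eq_bigr => i _; rewrite scalerDl scalerA.
  by rewrite scalerDr addrACA.
- exists (fun _ => 0), [:: (y, z)].
  by rewrite /brsum big_seq1 big1 ?add0r // => i _; rewrite scale0r.
Qed.

End Generated.

Section DirectSum.
Variables (R : pzRingType) (L : lieAlgType R).
Implicit Types (x y : L).

Lemma lie_subalgD (S : L -> Prop) x y : lie_subalg S -> S x -> S y -> S (x + y).
Proof. by case=> _ hS _ Sx Sy; have := hS 1 x y Sx Sy; rewrite scale1r. Qed.

Lemma lie_subalgB (S : L -> Prop) x y : lie_subalg S -> S x -> S y -> S (x - y).
Proof. by case=> _ hS _ Sx Sy; have := hS (-1) y x Sy Sx; rewrite scaleN1r addrC. Qed.

Lemma lie_subalg_brsum (S : L -> Prop) s :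
  lie_subalg S -> (forall p, p \in s -> S p.1 /\ S p.2) -> S (brsum s).
Proof.
move=> hS; elim: s => [|p s IH] hs; first by rewrite /brsum big_nil; case: hS.
have [Sp1 Sp2] := hs p (mem_head _ _).
rewrite /brsum big_cons; apply: lie_subalgD => //; first by case: hS => _ _; apply.
by apply: IH => q sq; apply: hs; rewrite in_cons sq orbT.
Qed.

Lemma lie_subalg_fixed (f : L -> L) : lie_hom f -> lie_subalg (fun x => f x = x).
Proof.
move=> hf; split=> [|a x y ex ey|x y ex ey]; first exact: lie_hom0.
  by rewrite hf.1 ex ey.
by rewrite hf.2 ex ey.
Qed.

Lemma lie_direct_sumC (L1 L2 : L -> Prop) : lie_direct_sum L1 L2 -> lie_direct_sum L2 L1.
Proof.
case=> h1 h2 hdec hcap hcomm; split=> // [x|x x2 x1|x y x2 y1].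
- by have [y [z [y1 z2 ->]]] := hdec x; exists z, y; rewrite addrC.
- exact: hcap.
- by rewrite lie_br_anti hcomm ?oppr0.
Qed.

Lemma brsum_direct_split (L1 L2 : L -> Prop) s : lie_direct_sum L1 L2 ->
  exists s1 s2, [/\ (forall p, p \in s1 -> L1 p.1 /\ L1 p.2),
    (forall p, p \in s2 -> L2 p.1 /\ L2 p.2) & brsum s = brsum s1 + brsum s2].
Proof.
move=> [_ _ hdec _ hcomm]; elim: s => [|p s [s1 [s2 [hs1 hs2 e]]]].
  by exists [::], [::]; split => //; rewrite /brsum !big_nil addr0.
have [a1 [a2 [ha1 ha2 ea]]] := hdec p.1.
have [b1 [b2 [hb1 hb2 eb]]] := hdec p.2.
exists ((a1, b1) :: s1), ((a2, b2) :: s2); split.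
- by move=> q; rewrite in_cons => /orP [/eqP -> //|]; apply: hs1.
- by move=> q; rewrite in_cons => /orP [/eqP -> //|]; apply: hs2.
rewrite /brsum !big_cons -/(brsum s) -/(brsum s1) -/(brsum s2) e ea eb /=.
rewrite lie_brDl !lie_brDr (hcomm a1 b2) // (lie_br_anti a2) (hcomm b1 a2) //.
by rewrite oppr0 addr0 add0r addrACA.
Qed.

Lemma lie_direct_sum_proj (p1 p2 : L -> L) :
  lie_hom p1 -> lie_hom p2 -> (forall x, p1 x + p2 x = x) ->
  (forall x, p1 (p2 x) = 0) -> (forall x y, lie_br (p1 x) (p2 y) = 0) ->
  lie_direct_sum (fun x => p1 x = x) (fun x => p2 x = x).
Proof.
move=> h1 h2 hsum h12 hcomm.
have p1K x : p1 (p1 x) = p1 x by rewrite -{2}(hsum x) lie_homD // h12 addr0.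
have h21 x : p2 (p1 x) = 0.
  by have /eqP := hsum (p1 x); rewrite p1K -subr_eq0 addrAC subrr add0r => /eqP.
have p2K x : p2 (p2 x) = p2 x by rewrite -{2}(hsum x) lie_homD // h21 add0r.
split; [exact: lie_subalg_fixed | exact: lie_subalg_fixed | | |].
- by move=> x; exists (p1 x), (p2 x).
- by move=> x e1 e2; rewrite -e1 -e2 h12.
- by move=> x y e1 e2; rewrite -e1 -e2 hcomm.
Qed.

End DirectSum.

(* Being two-step nilpotent, it receives a homomorphism from every partially
   commutative algebra sending a_i to the i-th unit vector, which reads off
   linear parts. *)
Section QuadraticModel.
Variables (R : comPzRingType) (n : nat) (G : rel 'I_n).

Local Notation quad := ('rV[R]_n * 'M[R]_n)%type.

Definition quad_br (x y : quad) : quad :=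
  (0, \matrix_(p, q) (if G p q then 0 else x.1 0 p * y.1 0 q - x.1 0 q * y.1 0 p)).

Lemma quad_br0l x y : x.1 = 0 -> quad_br x y = 0.
Proof.
move=> x0; rewrite /quad_br x0; congr pair; apply/matrixP => p q; rewrite !mxE.
by case: (G p q); ring.
Qed.

Lemma quad_br0r x y : y.1 = 0 -> quad_br x y = 0.
Proof.
move=> y0; rewrite /quad_br y0; congr pair; apply/matrixP => p q; rewrite !mxE.
by case: (G p q); ring.
Qed.

Lemma quad_scaleD a (u v : quad) : a *: u + v = (a *: u.1 + v.1, a *: u.2 + v.2).
Proof. by []. Qed.

Definition quadLie : lieAlgType R.
refine (@LieAlg R quad quad_br _ _ _ _).
- move=> a x y z; rewrite !quad_scaleD /quad_br /=.
  congr pair; first by rewrite scaler0 addr0.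
  by apply/matrixP => p q; rewrite !mxE; case: (G p q); ring.
- move=> a x y z; rewrite !quad_scaleD /quad_br /=.
  congr pair; first by rewrite scaler0 addr0.
  by apply/matrixP => p q; rewrite !mxE; case: (G p q); ring.
- move=> x; rewrite /quad_br /=; congr pair; apply/matrixP => p q; rewrite !mxE.
  by case: (G p q); ring.
- by move=> x y z; rewrite !(@quad_br0r _ (quad_br _ _)) // !addr0.
Defined.

Definition quad_gen (i : 'I_n) : quadLie := (delta_mx 0 i, 0).

Lemma quad_variety k : (if k is PC_nilpotent m then (1 < m)%N else True) ->
  in_variety k quadLie.
Proof.
case: k => //= [_ x y z t|m m_gt1 x s size_s]; first exact: quad_br0l.
case: s size_s => [|a [|b s]] /= size_s; try by rewrite -size_s in m_gt1.
have -> : quad_br (quad_br x a) b = 0 by apply: quad_br0l.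
by elim: s {size_s} => //= c s IH; rewrite quad_br0l.
Qed.

Lemma quad_gen_rel : symmetric G ->
  forall i j, G i j -> lie_br (quad_gen i) (quad_gen j) = 0.
Proof.
move=> Gsym i j Gij; rewrite /= /quad_br /=; congr pair; apply/matrixP => p q.
rewrite !mxE; case Gpq: (G p q) => //; rewrite eqxx /= -!natrM !mulnb.
have /negPf-> : ~~ ((p == i) && (q == j)).
  by apply/andP => -[/eqP pi /eqP qj]; move: Gpq; rewrite pi qj Gij.
have /negPf-> : ~~ ((q == i) && (p == j)).
  by apply/andP => -[/eqP qi /eqP pj]; move: Gpq; rewrite qi pj Gsym Gij.
by rewrite subrr.
Qed.

Lemma quad_br_eq0 (u v : quadLie) p q : lie_br u v = 0 -> ~~ G p q ->
  u.1 0 p * v.1 0 q = u.1 0 q * v.1 0 p.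
Proof.
move=> /(congr1 (fun w : quadLie => w.2 p q)) /= + nGpq.
by rewrite /quad_br /= !mxE (negPf nGpq) => /eqP; rewrite subr_eq0 => /eqP.
Qed.

End QuadraticModel.

Section EdgeMinors.
Variables (R : idomainType) (n : nat) (E : rel 'I_n).
Hypotheses (n_gt1 : (1 < n)%N) (E_irr : irreflexive E) (E_sym : symmetric E)
  (E_conn : graph_connected E).

Lemma connected_neighbour i : exists j, E i j.
Proof.
have [j ij] : exists j : 'I_n, i != j.
  have [->|] := eqVneq i (Ordinal (ltnW n_gt1)); last by exists (Ordinal (ltnW n_gt1)).
  by exists (Ordinal n_gt1).
have /connectP [[|h s] /= + eq_j] := E_conn i j; first by rewrite eq_j eqxx in ij.
by case/andP => Eih _; exists h.
Qed.

(* In the application M1 and M2 are the sets of linear parts of the two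
   summands, and U i, V i the linear parts of the two components of the i-th
   generator. *)
Lemma edge_minors_zero (M1 M2 : ('I_n -> R) -> Prop) (U V : 'I_n -> 'I_n -> R) :
  (forall i, M1 (U i)) -> (forall i, M2 (V i)) ->
  (forall i p, U i p + V i p = (i == p)%:R) ->
  (forall u v, M1 u -> M2 v -> forall p q, E p q -> u p * v q = u q * v p) ->
  (exists i, U i i != 0) -> forall v, M2 v -> forall p, v p = 0.
Proof.
move=> hU hV hUV hminor [i0 Ui0] v M2v p.
have V_off i j : i != j -> V i j = - U i j.
  by move=> ij; apply/eqP; rewrite -addr_eq0 addrC hUV (negPf ij).
have V_diag i : V i i = 1 - U i i.
  by apply/eqP; rewrite eq_sym subr_eq addrC hUV eqxx.
have U_edge i j : E i j -> U i j = 0.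
  move=> Eij; have ij : i != j by apply: contraTneq Eij => ->; rewrite E_irr.
  have := hminor _ _ (hU i) (hV i) _ _ Eij; rewrite V_off // V_diag => h.
  have -> : U i j = U i j * (1 - U i i) - U i i * (- U i j) by ring.
  by rewrite -h subrr.
have U_diag_edge i j : E i j -> U i i != 0 -> U j j != 0.
  move=> Eij Uii; have := hminor _ _ (hU i) (hV j) _ _ Eij.
  rewrite (U_edge i j) // mul0r => /eqP; rewrite mulf_eq0 (negPf Uii) V_diag subr_eq0.
  by move=> /eqP <-; apply: oner_neq0.
have U_diag j : U j j != 0.
  have /connectP [s + ->] := E_conn i0 j.
  by elim: s i0 Ui0 => [|h s IH] i Uii //= /andP [/U_diag_edge/(_ Uii) Uhh]; apply: IH.
have [i Epi] := connected_neighbour p; rewrite E_sym in Epi.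
have := hminor _ _ (hU i) M2v _ _ Epi; rewrite (U_edge i p) // mul0r => /eqP.
by rewrite mulf_eq0 (negPf (U_diag i)) => /eqP.
Qed.

Lemma edge_minors_one_side (M1 M2 : ('I_n -> R) -> Prop) (U V : 'I_n -> 'I_n -> R) :
  (forall i, M1 (U i)) -> (forall i, M2 (V i)) ->
  (forall i p, U i p + V i p = (i == p)%:R) ->
  (forall u v, M1 u -> M2 v -> forall p q, E p q -> u p * v q = u q * v p) ->
  (forall u, M1 u -> forall p, u p = 0) \/ (forall v, M2 v -> forall p, v p = 0).
Proof.
move=> hU hV hUV hminor.
have [[i Uii]|noU] := pselect (exists i, U i i != 0).
  by right; apply: (edge_minors_zero hU hV hUV hminor); exists i.
left; apply: (edge_minors_zero hV hU) => [i p|v u M2v M1u p q Epq|].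
- by rewrite addrC.
- by rewrite mulrC [RHS]mulrC (hminor _ _ M1u M2v q p) // E_sym.
pose i0 := Ordinal (ltnW n_gt1); exists i0.
have /eqP Ui0 : U i0 i0 == 0 by apply/negPn/negP => Ui0; apply: noU; exists i0.
by have := hUV i0 i0; rewrite Ui0 add0r eqxx => ->; apply: oner_neq0.
Qed.

End EdgeMinors.

Lemma sum_antisym_eq0 (V : zmodType) N (F : 'I_N -> 'I_N -> V) :
  (forall i j, F i j = - F j i) -> (forall i, F i i = 0) -> \sum_i \sum_j F i j = 0.
Proof.
elim: N F => [|N IH] F Fanti Fdiag; first by rewrite big_ord0.
rewrite big_ord_recr /= big_ord_recr /= Fdiag addr0.
under eq_bigr => i _ do rewrite big_ord_recr /=.
rewrite big_split /= IH // add0r -big_split big1 // => i _.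
by rewrite /= Fanti addNr.
Qed.

Lemma sum3_rotate (V : nmodType) N (F : 'I_N -> 'I_N -> 'I_N -> V) :
  \sum_i \sum_j \sum_m F i j m = \sum_j \sum_m \sum_i F i j m.
Proof. by rewrite exchange_big; apply: eq_bigr => j _; rewrite exchange_big. Qed.

Lemma sum3_cyclic_eq0 (V : zmodType) N (F1 F2 F3 : 'I_N -> 'I_N -> 'I_N -> V) :
  (forall i j m, F1 i j m + F2 j m i + F3 m i j = 0) ->
  \sum_i \sum_j \sum_m F1 i j m + \sum_i \sum_j \sum_m F2 i j m
    + \sum_i \sum_j \sum_m F3 i j m = 0.
Proof.
move=> hF.
rewrite -(sum3_rotate (fun i j m => F2 j m i)) -(sum3_rotate (fun j m i => F3 m i j)).
rewrite -(sum3_rotate (fun i j m => F3 m i j)) -!big_split big1 // => i _.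
rewrite -!big_split big1 // => j _.
by rewrite -!big_split big1 // => m _; apply: hF.
Qed.

(* [truncLie L M] is L tensored with the semigroup algebra of {0, ..., M} under
   (i, j) |-> min (i + j, M): the sum of the components is a homomorphism back
   to L, while the components record the degree filtration up to M. *)
Section TruncatedCurrent.
Variables (R : pzRingType) (L : lieAlgType R) (M : nat).

Definition trunc_deg (i j : 'I_M.+1) : 'I_M.+1 :=
  Ordinal (leq_ltn_trans (geq_minr (i + j) M) (ltnSn M)).

Lemma trunc_degC i j : trunc_deg i j = trunc_deg j i.
Proof. by apply: val_inj; rewrite /= addnC. Qed.

Definition trunc_br (f g : {ffun 'I_M.+1 -> L}) : {ffun 'I_M.+1 -> L} :=
  [ffun k => \sum_i \sum_j if k == trunc_deg i j then lie_br (f i) (g j) else 0].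

Lemma trunc_br_nested f g h k :
  trunc_br f (trunc_br g h) k = \sum_(i < M.+1) \sum_(j < M.+1) \sum_(m < M.+1)
    if (k : nat) == minn (i + j + m) M then lie_br (f i) (lie_br (g j) (h m)) else 0.
Proof.
rewrite ffunE; apply: eq_bigr => i _.
transitivity (\sum_l \sum_j \sum_m if l == trunc_deg j m then
    (if k == trunc_deg i l then lie_br (f i) (lie_br (g j) (h m)) else 0) else 0).
  apply: eq_bigr => l _; rewrite ffunE; case: eqP => _; last first.
    by rewrite big1 // => j _; rewrite big1 // => m _; case: eqP.
  rewrite lie_br_sumr; apply: eq_bigr => j _; rewrite lie_br_sumr.
  by apply: eq_bigr => m _; case: eqP => _; rewrite ?lie_br0r.
rewrite exchange_big; apply: eq_bigr => j _; rewrite exchange_big.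
apply: eq_bigr => m _; rewrite -big_mkcond big_pred1_eq -val_eqE /=.
by have -> : minn (i + minn (j + m) M) M = minn (i + j + m) M by lia.
Qed.

Definition truncLie : lieAlgType R.
refine (@LieAlg R {ffun 'I_M.+1 -> L} trunc_br _ _ _ _).
- move=> a x y z; apply/ffunP => k; rewrite !ffunE scaler_sumr -big_split.
  apply: eq_bigr => i _; rewrite scaler_sumr -big_split; apply: eq_bigr => j _.
  by rewrite /= !ffunE; case: eqP => _; rewrite ?lie_linl ?scaler0 ?addr0.
- move=> a x y z; apply/ffunP => k; rewrite !ffunE scaler_sumr -big_split.
  apply: eq_bigr => i _; rewrite scaler_sumr -big_split; apply: eq_bigr => j _.
  by rewrite /= !ffunE; case: eqP => _; rewrite ?lie_linr ?scaler0 ?addr0.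
- move=> x; apply/ffunP => k; rewrite !ffunE; apply: sum_antisym_eq0 => [i j|i].
    by rewrite trunc_degC; case: eqP => _; rewrite ?oppr0 // lie_br_anti.
  by case: eqP => _; rewrite ?lie_alt.
- move=> x y z; apply/ffunP => k.
  have sum3E (u v w : {ffun 'I_M.+1 -> L}) : (u + v + w) k = u k + v k + w k.
    by rewrite !ffunE.
  rewrite sum3E !trunc_br_nested ffunE; apply: sum3_cyclic_eq0 => i j m.
  have -> : (j + m + i = i + j + m)%N by lia.
  have -> : (m + i + j = i + j + m)%N by lia.
  by case: eqP => _; rewrite ?lie_jacobi ?addr0.
Defined.

Lemma trunc_brE (f g : truncLie) k :
  lie_br f g k = \sum_i \sum_j if k == trunc_deg i j then lie_br (f i) (g j) else 0.
Proof. by rewrite ffunE. Qed.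

Definition trunc_sum (f : truncLie) : L := \sum_k f k.

Lemma trunc_sum_hom : lie_hom trunc_sum.
Proof.
split=> [a f g|f g]; rewrite /trunc_sum.
  by rewrite scaler_sumr -big_split; apply: eq_bigr => k _; rewrite !ffunE.
under eq_bigr => k _ do rewrite trunc_brE.
rewrite sum3_rotate lie_br_suml; apply: eq_bigr => i _.
by rewrite lie_br_sumr; apply: eq_bigr => j _; rewrite -big_mkcond big_pred1_eq.
Qed.

End TruncatedCurrent.

Section DegreeFiltration.
Variables (R : pzRingType) (n : nat) (G : rel 'I_n) (L : lieAlgType R)
  (gen : 'I_n -> L).
Hypothesis hp : pc_presentation PC_all G gen.

Definition trunc_deg1 M (x : L) : truncLie L M :=
  [ffun k : 'I_M.+1 => if (k : nat) == 1%N then x else 0].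

Definition deg1_hom M (phi : L -> truncLie L M) :=
  lie_hom phi /\ forall i, phi (gen i) = trunc_deg1 M (gen i).

Lemma deg1_hom_exists M : exists phi, @deg1_hom M phi.
Proof.
apply: (pc_hom_exists hp) => // i j Gij; apply/ffunP => k.
rewrite trunc_brE ffunE big1 // => a _; rewrite big1 // => b _; rewrite !ffunE.
case: eqP => // _; case: eqP => _; case: eqP => _; rewrite ?lie_br0l ?lie_br0r //.
exact: hp.2.1.
Qed.

Definition bounded_degree (x : L) := exists N, forall M phi, @deg1_hom M phi ->
  forall k : 'I_M.+1, ((k : nat) == 0%N) || (N <= k)%N -> phi x k = 0.

Lemma pc_bounded_degree x : bounded_degree x.
Proof.
elim: (pc_generated hp x) => [i||a y z _ [N1 h1] _ [N2 h2]|y z _ [N1 h1] _ [N2 h2]].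
- exists 2%N => M phi [_ phi_gen] k; rewrite phi_gen ffunE.
  by case: ifP => // /eqP ->.
- by exists 0%N => M phi [hphi _] k _; rewrite lie_hom0 // ffunE.
- exists (maxn N1 N2) => M phi hphi k; rewrite geq_max => hk.
  rewrite hphi.1.1 !ffunE (h1 _ phi) ?(h2 _ phi) ?scaler0 ?addr0 //.
    by case/orP: hk => [->|/andP [_ ->]]; rewrite ?orbT.
  by case/orP: hk => [->|/andP [-> _]]; rewrite ?orbT.
- exists (N1 + N2)%N => M phi hphi k hk; rewrite hphi.1.2 trunc_brE big1 // => i _.
  rewrite big1 // => j _; case: eqP => // /(congr1 val) /= ek.
  have [hi|hi] := boolP (((i : nat) == 0%N) || (N1 <= i)%N).
    by rewrite (h1 _ phi) ?lie_br0l.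
  have [hj|hj] := boolP (((j : nat) == 0%N) || (N2 <= j)%N).
    by rewrite (h2 _ phi) ?lie_br0r.
  by exfalso; move: hk hi hj ek (ltn_ord i); lia.
Qed.

Section Deg1Hom.
Variables (M : nat) (phi : L -> truncLie L M).
Hypothesis hphi : deg1_hom phi.

Lemma deg1_hom_deg0 x : phi x ord0 = 0.
Proof. by have [N hN] := pc_bounded_degree x; apply: hN. Qed.

Lemma trunc_sum_deg1_hom x : (0 < M)%N -> trunc_sum (phi x) = x.
Proof.
move=> M_gt0; have hsum := lie_hom_comp hphi.1 (trunc_sum_hom L M).
apply: (lie_hom_ext (pc_generated hp) hsum (lie_hom_id L)) => i /=.
rewrite hphi.2 /trunc_sum (bigD1 (Ordinal (M_gt0 : (1 < M.+1)%N))) //= ffunE /=.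
by rewrite big1 ?addr0 // => k; rewrite -val_eqE /= ffunE => /negPf->.
Qed.

(* Brackets add degrees and nothing has degree 0, so by induction on k a
   perfect set has no component of degree below k. *)
Lemma deg1_hom_perfect_low (S : L -> Prop) k z : lie_perfect S -> (k <= M)%N -> S z ->
  forall l : 'I_M.+1, (l < k)%N -> phi z l = 0.
Proof.
move=> hS; elim: k z => // k IH z k_le Sz l lk.
have [s [hs ->]] := hS z Sz.
rewrite /brsum (lie_hom_sum hphi.1) sum_ffunE big_seq big1 // => p sp.
have [Sp1 Sp2] := hs p sp.
rewrite hphi.1.2 trunc_brE big1 // => i _; rewrite big1 // => j _.
case: eqP => // /(congr1 val) /= el.
have [ik|ki] := ltnP i k; first by rewrite (IH _ (ltnW k_le) Sp1) ?lie_br0l.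
have [j0|j_gt0] := posnP j.
  have -> : j = ord0 by apply: val_inj.
  by rewrite deg1_hom_deg0 lie_br0r.
by exfalso; move: k_le lk ki j_gt0 el; lia.
Qed.

End Deg1Hom.

Lemma pc_all_perfect_eq0 (S : L -> Prop) z : lie_perfect S -> S z -> z = 0.
Proof.
move=> hS Sz; have [N hN] := pc_bounded_degree z.
have [phi hphi] := deg1_hom_exists N.+1.
have phi_z : phi z = 0.
  apply/ffunP => l; rewrite ffunE.
  have [lN|Nl] := ltnP l N.+1; first exact: (deg1_hom_perfect_low hphi hS (leqnn _) Sz).
  by apply: hN hphi _ _; rewrite (ltnW Nl) orbT.
rewrite -(trunc_sum_deg1_hom hphi z) // phi_z /trunc_sum.
by rewrite big1 // => k _; rewrite ffunE.
Qed.

End DegreeFiltration.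

Lemma lnorm_rcons (R : pzRingType) (L : lieAlgType R) (x b : L) s :
  lnorm x (rcons s b) = lie_br (lnorm x s) b.
Proof. by rewrite /lnorm foldl_rcons. Qed.

Section PerfectSets.
Variables (R : pzRingType) (L : lieAlgType R) (S : L -> Prop).
Hypothesis hS : lie_perfect S.

Lemma perfect_lnorm t z : S z -> exists ls : seq (L * seq L),
  (forall q, q \in ls -> size q.2 = t) /\ z = \sum_(q <- ls) lnorm q.1 q.2.
Proof.
elim: t z => [|t IH] z Sz.
  exists [:: (z, [::])]; split; first by move=> q; rewrite inE => /eqP ->.
  by rewrite big_seq1.
have [s [hs ->]] := hS Sz; elim: s hs => [|p s IHs] hs.
  by exists [::]; split => //; rewrite /brsum !big_nil.
have [Sp1 Sp2] := hs p (mem_head _ _).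
have [ls1 [size_ls1 e1]] := IH _ Sp1.
have [|ls2 [size_ls2 e2]] := IHs; first by move=> q sq; apply: hs; rewrite in_cons sq orbT.
exists (map (fun q => (q.1, rcons q.2 p.2)) ls1 ++ ls2); split.
  move=> q; rewrite mem_cat => /orP [/mapP [q' q'_ls1 ->]|]; last exact: size_ls2.
  by rewrite /= size_rcons size_ls1.
rewrite /brsum big_cons -/(brsum s) e1 e2 big_cat big_map lie_br_suml /=.
by congr (_ + _); apply: eq_bigr => q _; rewrite lnorm_rcons.
Qed.

Lemma metabelian_perfect_eq0 z : in_variety PC_metabelian L -> S z -> z = 0.
Proof.
move=> hv Sz; have [s [hs ->]] := hS Sz.
rewrite /brsum big_seq big1 // => p /hs [Sp1 Sp2].
have [s1 [_ ->]] := hS Sp1; have [s2 [_ ->]] := hS Sp2.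
rewrite /brsum lie_br_suml; apply: big1 => q _.
by rewrite lie_br_sumr; apply: big1 => r _; apply: hv.
Qed.

Lemma nilpotent_perfect_eq0 m z : in_variety (PC_nilpotent m) L -> S z -> z = 0.
Proof.
move=> hv Sz; have [ls [size_ls ->]] := perfect_lnorm m Sz.
by rewrite big_seq big1 // => q /size_ls; apply: hv.
Qed.

End PerfectSets.

Lemma pc_perfect_eq0 (R : pzRingType) (k : pc_kind) (n : nat) (G : rel 'I_n)
    (L : lieAlgType R) (gen : 'I_n -> L) (S : L -> Prop) z :
  pc_presentation k G gen -> lie_perfect S -> S z -> z = 0.
Proof.
case: k => [||m] hp hS Sz.
- exact: (pc_all_perfect_eq0 hp hS Sz).
- exact: (metabelian_perfect_eq0 hS (proj1 hp) Sz).
- exact: (nilpotent_perfect_eq0 hS (proj1 hp) Sz).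
Qed.

Section LinearParts.
Variables (R : comPzRingType) (n : nat) (G : rel 'I_n) (L : lieAlgType R)
  (gen : 'I_n -> L).
Hypothesis hgen : forall x, lie_generated gen x.
Variable phi : L -> quadLie R G.
Hypotheses (hphi : lie_hom phi) (phi_gen : forall i, phi (gen i) = quad_gen R G i).

Lemma quad_linear_coord (c : 'I_n -> R) s j :
  (phi (\sum_i c i *: gen i + brsum s)).1 0 j = c j.
Proof.
have fst_sum I (r : seq I) (F : I -> quadLie R G) :
    (\sum_(i <- r) F i).1 = \sum_(i <- r) (F i).1.
  exact: (big_morph fst).
rewrite (lie_homD hphi) /brsum !(lie_hom_sum hphi) /= !fst_sum.
rewrite [X in _ + X]big1 => [|p _]; last by rewrite (lie_hom_br hphi).
rewrite addr0 summxE (bigD1 j) //= big1 => [|i ij].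
  by rewrite (lie_homZ hphi) phi_gen !mxE !eqxx mulr1 addr0.
by rewrite (lie_homZ hphi) phi_gen !mxE eqxx /= eq_sym (negPf ij) mulr0.
Qed.

Variables (L1 L2 : L -> Prop).
Hypotheses (hds : lie_direct_sum L1 L2)
  (L2_lin0 : forall z, L2 z -> forall j, (phi z).1 0 j = 0).

(* An element of L2 without linear part is a sum of brackets; their L1-parts
   cancel, since [L1, L2] = 0 and L1 meets L2 trivially. *)
Lemma summand_perfect : lie_perfect L2.
Proof.
move=> z L2z; have [c [s z_def]] := generated_decomp hgen z.
have c0 j : c j = 0 by rewrite -(quad_linear_coord c s j) -z_def L2_lin0.
have z_s : z = brsum s by rewrite z_def big1 ?add0r // => i _; rewrite c0 scale0r.
have [s1 [s2 [hs1 hs2 s_split]]] := brsum_direct_split s hds.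
have [L1sub L2sub _ hcap _] := hds.
have L2s1 : L2 (brsum s1).
  have -> : brsum s1 = z - brsum s2 by rewrite z_s s_split addrK.
  exact: lie_subalgB L2sub L2z (lie_subalg_brsum L2sub hs2).
exists s2; split => //.
by rewrite z_s s_split (hcap _ (lie_subalg_brsum L1sub hs1) L2s1) add0r.
Qed.

End LinearParts.

Section CutSplitting.
Variables (R : pzRingType) (k : pc_kind) (n : nat) (G : rel 'I_n)
  (L : lieAlgType R) (gen : 'I_n -> L).
Hypothesis hp : pc_presentation k G gen.

Lemma pc_restriction_hom (A : pred 'I_n) :
  exists f : L -> L, lie_hom f /\ forall i, f (gen i) = if A i then gen i else 0.
Proof.
apply: (pc_hom_exists hp hp.1) => i j Gij.
by case: (A i); case: (A j); rewrite ?lie_br0l ?lie_br0r ?hp.2.1.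
Qed.

Lemma pc_cut_split (A : pred 'I_n) : (forall p q, A p -> ~~ A q -> G p q) ->
  exists L1 L2 : L -> Prop, [/\ lie_direct_sum L1 L2,
    forall i, A i -> L1 (gen i) & forall i, ~~ A i -> L2 (gen i)].
Proof.
move=> hcut; have hgen := pc_generated hp.
have [p1 [hp1 p1_gen]] := pc_restriction_hom A.
have [p2 [hp2 p2_gen]] := pc_restriction_hom (predC A).
have gen_p2 i y : lie_br (p1 (gen i)) (p2 y) = 0.
  rewrite p1_gen; case: ifP => Ai; last exact: lie_br0l.
  apply: (lie_hom_centralizes hgen hp2) => j; rewrite p2_gen /=.
  by case: ifP => nAj; [apply: hp.2.1; apply: hcut | apply: lie_br0r].
have p1_p2 x y : lie_br (p1 x) (p2 y) = 0.
  rewrite lie_br_anti (lie_hom_centralizes hgen hp1) ?oppr0 // => i.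
  by rewrite lie_br_anti gen_p2 oppr0.
have hsum : lie_hom (fun x => p1 x + p2 x).
  split=> [a y z|y z]; first by rewrite hp1.1 hp2.1 scalerDr addrACA.
  rewrite hp1.2 hp2.2 lie_brDl !lie_brDr p1_p2 (lie_br_anti (p2 y) (p1 z)) p1_p2.
  by rewrite oppr0 addr0 add0r.
have p1p2_id : forall x, p1 x + p2 x = x.
  apply: (lie_hom_ext hgen hsum (lie_hom_id L)) => i /=.
  by rewrite p1_gen p2_gen /=; case: (A i); rewrite ?addr0 ?add0r.
have p1p2 : forall x, p1 (p2 x) = 0.
  apply: (lie_hom_ext hgen (lie_hom_comp hp2 hp1) (lie_hom_zero L L)) => i /=.
  by rewrite p2_gen /=; case: ifP => nAi; rewrite ?lie_hom0 // p1_gen (negbTE nAi).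
exists (fun x => p1 x = x), (fun x => p2 x = x); split.
- exact: lie_direct_sum_proj.
- by move=> i Ai; rewrite p1_gen Ai.
- by move=> i nAi; rewrite p2_gen /= nAi.
Qed.

End CutSplitting.

Lemma pc_gen_neq0 (R : comNzRingType) (k : pc_kind) (n : nat) (G : rel 'I_n)
    (L : lieAlgType R) (gen : 'I_n -> L) :
  symmetric G -> (if k is PC_nilpotent m then (1 < m)%N else True) ->
  pc_presentation k G gen -> forall i, gen i <> 0.
Proof.
move=> Gsym hk hp i gen0.
have [phi [hphi phi_gen]] := pc_hom_exists hp (quad_variety R G hk) (quad_gen_rel R Gsym).
have := congr1 (fun w : quadLie R G => w.1 0 i) (phi_gen i).
by rewrite gen0 lie_hom0 // !mxE !eqxx => /esym/eqP; rewrite oner_eq0.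
Qed.

Section ConnectedComplement.
Variables (R : idomainType) (k : pc_kind) (n : nat) (G : rel 'I_n)
  (L : lieAlgType R) (gen : 'I_n -> L).
Hypotheses (n_gt1 : (1 < n)%N) (Gsym : symmetric G)
  (hk : if k is PC_nilpotent m then (1 < m)%N else True)
  (hp : pc_presentation k G gen) (hconn : graph_connected (compl_graph G)).

Lemma pc_direct_sum_trivial (L1 L2 : L -> Prop) : lie_direct_sum L1 L2 ->
  (forall x, L1 x -> x = 0) \/ (forall x, L2 x -> x = 0).
Proof.
move=> hds; have [_ _ hdec _ hcomm] := hds.
have [phi [hphi phi_gen]] :=
  pc_hom_exists hp (quad_variety R G hk) (quad_gen_rel R Gsym).
have gen_split i : exists yz : L * L, [/\ L1 yz.1, L2 yz.2 & gen i = yz.1 + yz.2].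
  by have [y [z [? ? ?]]] := hdec (gen i); exists (y, z).
have [yz yz_gen] := fin_all_exists gen_split.
pose lin x p := (phi x).1 0 p.
pose lin1 u := exists2 y, L1 y & u = lin y.
pose lin2 v := exists2 z, L2 z & v = lin z.
have [lin1_0|lin2_0] : (forall u, lin1 u -> forall p, u p = 0) \/
    (forall v, lin2 v -> forall p, v p = 0).
  apply: (edge_minors_one_side n_gt1 _ _ hconn
    (U := fun i => lin (yz i).1) (V := fun i => lin (yz i).2)).
  - by move=> i; rewrite /compl_graph eqxx.
  - by move=> i j; rewrite /compl_graph eq_sym Gsym.
  - by move=> i; exists (yz i).1; case: (yz_gen i).
  - by move=> i; exists (yz i).2; case: (yz_gen i).
  - move=> i p; have [_ _ /(congr1 (lin^~ p))] := yz_gen i.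
    by rewrite /lin (lie_homD hphi) phi_gen !mxE eqxx eq_sym => ->.
  - move=> _ _ [y L1y ->] [z L2z ->] p q /andP [_ nGpq].
    by apply: quad_br_eq0 nGpq; rewrite -(lie_hom_br hphi) hcomm // lie_hom0.
- left => x L1x; apply: (pc_perfect_eq0 hp _ L1x).
  apply: (summand_perfect (pc_generated hp) hphi phi_gen (lie_direct_sumC hds)).
  by move=> z L1z; apply: lin1_0; exists z.
- right => x L2x; apply: (pc_perfect_eq0 hp _ L2x).
  apply: (summand_perfect (pc_generated hp) hphi phi_gen hds).
  by move=> z L2z; apply: lin2_0; exists z.
Qed.

End ConnectedComplement.

Lemma graph_disconnected n (E : rel 'I_n) :
  ~ graph_connected E -> exists i j, ~~ connect E i j.
Proof.
move=> nconn; have [//|no_cut] := pselect (exists i j, ~~ connect E i j).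
by case: nconn => i j; apply/negPn/negP => nij; apply: no_cut; exists i, j.
Qed.

Lemma compl_component_cut n (G : rel 'I_n) i0 p q :
  connect (compl_graph G) i0 p -> ~~ connect (compl_graph G) i0 q -> G p q.
Proof.
move=> i0p; apply: contraNT => nGpq; have [<-|pq] := eqVneq p q; first done.
by apply: connect_trans i0p (connect1 _); rewrite /compl_graph pq nGpq.
Qed.

Theorem theorem3 (R : idomainType) (n : nat) (G : rel 'I_n) (k : pc_kind)
    (L : lieAlgType R) (gen : 'I_n -> L) :
  (1 < n)%N -> symmetric G -> irreflexive G ->
  (if k is PC_nilpotent m then (1 < m)%N else True) ->
  pc_presentation k G gen ->
  (exists L1 L2 : L -> Prop,
      [/\ lie_direct_sum L1 L2,
          (exists x, L1 x /\ x <> 0) &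
          (exists x, L2 x /\ x <> 0)])
  <-> ~ graph_connected (compl_graph G).
Proof.
(* [compl_graph] excludes loops by itself. *)
move=> n_gt1 Gsym _ hk hp; split.
  move=> [L1 [L2 [hds [x1 [L1x1 x1_neq0]] [x2 [L2x2 x2_neq0]]]]] hconn.
  have [/(_ x1 L1x1)|/(_ x2 L2x2)] := pc_direct_sum_trivial n_gt1 Gsym hk hp hconn hds.
    exact: x1_neq0.
  exact: x2_neq0.
move=> /graph_disconnected [i0 [j0 i0_j0]].
have [L1 [L2 [hds L1_gen L2_gen]]] := pc_cut_split hp (@compl_component_cut n G i0).
exists L1, L2; split => //.
  by exists (gen i0); split; [apply/L1_gen/connect0 | exact: (pc_gen_neq0 Gsym hk hp)].
by exists (gen j0); split; [apply: L2_gen | exact: (pc_gen_neq0 Gsym hk hp)].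
Qed.
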